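(* Let $\mathbf{s}=(s_1,\ldots,s_r)$ and $\mathbf{t}=(t_1,\ldots,t_r)$ be $r$-tuples of positive integers such that $s_1+\cdots+s_r\ge t_1+\cdots+t_r$ and there is an index $l$ with $0\le l\le r-1$ such that $s_i\le t_i$ for $1\le i\le l$ and $s_i\ge t_i$ for $l+1\le i\le r$. Then for every positive integer $n$, $H_n(s_1,\ldots,s_r)\le H_n(t_1,\ldots,t_r)$. In particular this holds whenever $s_i\ge t_i$ for all $i$.
   Context: $H_n(s_1,\ldots,s_r)=\sum_{1\le k_1<k_2<\cdots<k_r\le n}\frac{1}{k_1^{s_1}\cdots k_r^{s_r}}$ (an empty sum, equal to $0$, if $n<r$). *)

From mathcomp Require Import all_boot all_order all_algebra.
Set Implicit Arguments. Unset Strict Implicit. Unset Printing Implicit Defensive.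
Import Order.TTheory GRing.Theory Num.Theory.
Local Open Scope ring_scope.

(* Multiple harmonic sum H_n(s_1,...,s_r), with the r-tuple s given as
   s : 'I_r -> nat (index i : 'I_r stands for s_{i+1}). *)
Definition H (n r : nat) (s : 'I_r -> nat) : rat :=
  \sum_(k : {ffun 'I_r -> 'I_n.+1} |
          [forall i : 'I_r, (0 < k i)%N] &&
          [forall i : 'I_r, forall j : 'I_r, (i < j)%N ==> (k i < k j)%N])
     \prod_(i < r) ((k i)%:R ^+ (s i))^-1.

From mathcomp Require Import all_boot all_order all_algebra.
Import Order.TTheory GRing.Theory Num.Theory.
Local Open Scope ring_scope.

(* The comparison is termwise in the sum defining H: for 0 < k_1 < ... < k_r
   it suffices that prod k_i^t_i <= prod k_i^s_i.  Taking the pivot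
   m = k_(l+1), one has k_i^t_i m^s_i <= k_i^s_i m^t_i for every i (k_i <= m
   where s_i <= t_i, and k_i >= m where s_i >= t_i); multiplying these and
   using m^(sum t) <= m^(sum s) gives the claim after cancelling m^(sum s). *)

Lemma leq_expn_cross (a m s t : nat) : (a <= m)%N -> (s <= t)%N ->
  (a ^ t * m ^ s <= a ^ s * m ^ t)%N.
Proof.
move=> le_am le_st; rewrite -(subnKC le_st) !expnD mulnAC -!mulnA.
by rewrite !leq_mul2l; case: (t - s)%N => [|e]; rewrite ?expn0 ?leq_exp2r ?le_am ?orbT.
Qed.

Lemma leq_prod_expn (I : finType) (a : I -> nat) (m : nat) (s t : I -> nat) :
  (0 < m)%N -> (\sum_i t i <= \sum_i s i)%N ->
  (forall i, a i ^ t i * m ^ s i <= a i ^ s i * m ^ t i)%N ->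
  (\prod_i a i ^ t i <= \prod_i a i ^ s i)%N.
Proof.
move=> m_gt0 le_sum le_cross.
have le_prod : (\prod_i a i ^ t i * m ^ (\sum_i s i)
                <= \prod_i a i ^ s i * m ^ (\sum_i t i))%N.
  by rewrite !expn_sum -!big_split; apply: leq_prod => i _.
have pow_gt0 : (0 < m ^ (\sum_i s i))%N by rewrite expn_gt0 m_gt0.
rewrite -(leq_pmul2r pow_gt0); apply: (leq_trans le_prod).
by rewrite leq_mul2l leq_pexp2l ?orbT.
Qed.

Lemma ler_prod_invr_expr (R : numFieldType) (I : finType) (a : I -> nat)
    (s t : I -> nat) :
  (forall i, 0 < a i)%N -> (\prod_i a i ^ t i <= \prod_i a i ^ s i)%N ->
  \prod_i ((a i)%:R ^+ s i)^-1 <= \prod_i ((a i)%:R ^+ t i)^-1 :> R.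
Proof.
move=> a_gt0 le_prod.
have prod_gt0 (u : I -> nat) : 0 < \prod_i ((a i)%:R ^+ u i) :> R.
  by apply: prodr_gt0 => i _; rewrite exprn_gt0 ?ltr0n.
rewrite !prodfV lef_pV2 ?posrE ?prod_gt0 //.
by rewrite -!(eq_bigr _ (fun i _ => natrX R _ _)) -!natr_prod ler_nat.
Qed.

Theorem lemma2 (r : nat) (s t : 'I_r -> nat)
    (hs : forall i, (0 < s i)%N) (ht : forall i, (0 < t i)%N)
    (hsum : (\sum_(i < r) t i <= \sum_(i < r) s i)%N)
    (l : nat) (hl : (l <= r.-1)%N)
    (hlow : forall i : 'I_r, (i < l)%N -> (s i <= t i)%N)
    (hhigh : forall i : 'I_r, (l <= i)%N -> (t i <= s i)%N)
    (n : nat) (hn : (0 < n)%N) :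
  H n s <= H n t.
Proof.
clear hs ht hn; apply: ler_sum => k /andP[/forallP k_gt0 /forallP k_incr].
apply: ler_prod_invr_expr => //.
case: r => [|r] in s t hsum hl hlow hhigh k k_gt0 k_incr *; first by rewrite !big_ord0.
have k_mono (i j : 'I_r.+1) : (i <= j)%N -> (k i <= k j)%N.
  rewrite leq_eqVlt => /orP[/eqP/val_inj -> //|lt_ij].
  by apply/ltnW; move/forallP/(_ j)/implyP: (k_incr i); apply.
pose p : 'I_r.+1 := Ordinal (hl : (l < r.+1)%N).
apply: (@leq_prod_expn _ _ (k p)) => // i.
have [lt_il|le_li] := ltnP i l.
  exact/leq_expn_cross/hlow/lt_il/k_mono/ltnW.
by rewrite mulnC [X in (_ <= X)%N]mulnC; apply/leq_expn_cross/hhigh/le_li/k_mono.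
Qed.
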